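(* Let $n\ge 3$ and let $p\neq q$ be integers such that there is a permutation $\pi$ of $\{1,\ldots,n\}$ whose discrete derivative takes exactly the values $p$ and $q$, i.e. $\{\pi_{i+1}-\pi_i : 1\le i\le n-1\}=\{p,q\}$. Then $p$ and $q$ have opposite signs, and $p$ and $q$ are relatively prime.
   Context: For a permutation $\pi=(\pi_1,\ldots,\pi_n)$ of $\{1,\ldots,n\}$, its discrete derivative is $D(\pi)=(\pi_2-\pi_1,\ldots,\pi_n-\pi_{n-1})$. A pair $(p,q)$ of distinct integers is called a $D$-pair if for some $n\ge 1$ there is a permutation $\pi$ of $\{1,\ldots,n\}$ whose set of discrete derivative values equals $\{p,q\}$. *)

From mathcomp Require Import all_boot all_order all_algebra.
Set Implicit Arguments. Unset Strict Implicit. Unset Printing Implicit Defensive.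
Import Order.TTheory GRing.Theory Num.Theory.
Local Open Scope ring_scope.

Definition is_perm_seq (n : nat) (s : seq int) : bool :=
  perm_eq s [seq (i%:Z) | i <- iota 1 n].

Definition dderiv (s : seq int) : seq int :=
  [seq (nth 0 s i.+1 - nth 0 s i) | i <- iota 0 (size s).-1].

(* The steps of a permutation are nonzero by injectivity. If all of them
   were positive, the permutation would be increasing, hence the identity,
   whose steps all equal 1, so p = q; reversing the permutation rules out
   all steps negative. Every step is a multiple of gcd(p, q), so all entries
   are congruent modulo gcd(p, q); as 1 and 2 are entries, gcd(p, q) = 1. *)

From mathcomp Require Import all_boot all_order all_algebra.
From mathcomp Require Import zify.
Import Order.TTheory GRing.Theory Num.Theory.
Local Open Scope ring_scope.

Section DiscreteDerivative.

Implicit Types (s : seq int) (P : pred int).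

Lemma all_dderiv P s : all P (dderiv s) = sorted (fun a b => P (b - a)) s.
Proof.
apply/allP/(sortedP 0) => [stepP i lt_i_s | stepP d /mapP[i]].
  by apply: stepP; apply/mapP; exists i; rewrite // mem_iota ltn_predRL.
by rewrite mem_iota ltn_predRL => lt_i_s ->; apply: stepP.
Qed.

Lemma all_dderiv_rev P s :
  all P (dderiv (rev s)) = all (fun d => P (- d)) (dderiv s).
Proof. by rewrite !all_dderiv rev_sorted; apply: eq_sorted => a b; rewrite opprB. Qed.

Lemma dderiv_neq0 {s} : uniq s -> 0 \notin dderiv s.
Proof.
move=> uniq_s; apply/mapP => -[i]; rewrite mem_iota ltn_predRL => /= lt_i_s /eqP.
by rewrite eq_sym subr_eq0 nth_uniq ?(gtn_eqF (ltnSn i)) // ltnW.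
Qed.

Lemma dvdz_dderiv_sub {d s} :
  all (fun m => d %| m)%Z (dderiv s) -> {in s &, forall x y, (d %| y - x)%Z}.
Proof.
have dvd_trans : transitive (fun a b => d %| b - a)%Z.
  by move=> b a c dba dcb; rewrite -(subrK b c) -addrA rpredD.
rewrite all_dderiv; case: s => // x0 s /(order_path_min dvd_trans) /allP dvd_x0.
have dvd_x0_mem y : y \in x0 :: s -> (d %| y - x0)%Z.
  by rewrite inE => /predU1P[->|/dvd_x0]; rewrite ?subrr ?dvdz0.
move=> x y /dvd_x0_mem dx /dvd_x0_mem dy.
by have := rpredB dy dx; rewrite opprB addrA subrK.
Qed.

End DiscreteDerivative.

Lemma sorted_ltz_iota m k : sorted <%R [seq i%:Z | i <- iota m k].
Proof.
by rewrite sorted_map; apply: sub_sorted (iota_ltn_sorted m k) => a b; rewrite /= ltz_nat.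
Qed.

Lemma dderiv_iota m k : all (pred1 1) (dderiv [seq i%:Z | i <- iota m k]).
Proof.
rewrite all_dderiv; apply/(sortedP 0) => i; rewrite size_map size_iota => lt_i_k.
rewrite !(nth_map 0%N) ?size_iota ?nth_iota ?(ltnW lt_i_k) //=; apply/eqP; lia.
Qed.

Section PermSeq.

Context {n : nat} {s : seq int}.
Hypothesis perm_s : is_perm_seq n s.

Lemma perm_seq_uniq : uniq s.
Proof. by rewrite (perm_uniq perm_s) map_inj_uniq ?iota_uniq // => a b []. Qed.

Lemma mem_perm_seq x : (x \in s) = (0 < x <= n%:Z).
Proof.
rewrite (perm_mem perm_s); apply/mapP/idP => [[i] | x_range].
  by rewrite mem_iota => i_range ->; lia.
by exists `|x|%N; rewrite ?mem_iota; lia.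
Qed.

Lemma perm_seq_rev : is_perm_seq n (rev s).
Proof. by rewrite /is_perm_seq perm_rev. Qed.

Lemma dderiv_perm_seq_gt0 :
  all (fun d => 0 < d) (dderiv s) -> all (pred1 1) (dderiv s).
Proof.
rewrite all_dderiv (eq_sorted (@subr_gt0 _)) => incr_s.
suff -> : s = [seq i%:Z | i <- iota 1 n] by apply: dderiv_iota.
apply: (irr_sorted_eq lt_trans ltxx) incr_s (sorted_ltz_iota 1 n) _.
exact: perm_mem.
Qed.

End PermSeq.

Lemma dderiv_perm_seq_lt0 {n s} : is_perm_seq n s ->
  all (fun d => d < 0) (dderiv s) -> all (pred1 (-1)) (dderiv s).
Proof.
move=> perm_s; have := dderiv_perm_seq_gt0 (perm_seq_rev perm_s).
by rewrite !all_dderiv_rev (eq_all (@oppr_gt0 _)) (eq_all (fun d => @eqr_oppLR _ d 1)).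
Qed.

Theorem lemma2p4 (n : nat) (p q : int) (pi : seq int) :
  (3 <= n)%N -> p != q -> is_perm_seq n pi ->
  (forall x : int, x \in dderiv pi <-> (x = p \/ x = q)) ->
  ((p < 0 < q) \/ (q < 0 < p)) /\ gcdz p q = 1.
Proof.
move=> n_ge3 neq_pq perm_pi dderiv_pi.
have p_in : p \in dderiv pi by apply/dderiv_pi; left.
have q_in : q \in dderiv pi by apply/dderiv_pi; right.
have all_pq (P : pred int) : P p -> P q -> all P (dderiv pi).
  by move=> Pp Pq; apply/allP => x /dderiv_pi[->|->].
have not_const c : ~~ all (pred1 c) (dderiv pi).
  apply/negP => /allP const_c; move: neq_pq.
  by rewrite (eqP (const_c p p_in)) (eqP (const_c q q_in)) eqxx.
split.
  have nz := dderiv_neq0 (perm_seq_uniq perm_pi).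
  have p_neq0 : p != 0 by apply: contraNneq nz => <-.
  have q_neq0 : q != 0 by apply: contraNneq nz => <-.
  have not_pos : ~~ ((0 < p) && (0 < q)).
    by apply: contra (not_const 1) => /andP[? ?]; apply/(dderiv_perm_seq_gt0 perm_pi)/all_pq.
  have not_neg : ~~ ((p < 0) && (q < 0)).
    by apply: contra (not_const (-1)) => /andP[? ?]; apply/(dderiv_perm_seq_lt0 perm_pi)/all_pq.
  lia.
have one_in : 1 \in pi by rewrite (mem_perm_seq perm_pi); lia.
have two_in : 2 \in pi by rewrite (mem_perm_seq perm_pi); lia.
have gcd_steps := all_pq _ (dvdz_gcdl p q) (dvdz_gcdr p q).
have := dvdz_dderiv_sub gcd_steps _ _ one_in two_in.
by rewrite dvdz1 /gcdz absz_nat => /eqP ->.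
Qed.
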